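(* Assume $M$ has genus zero. Then the law of $\omega$ under $\mathbf P$ stochastically dominates the $\mathrm{FK}(q)$ random cluster model on $\mathsf G$ with parameter $p=1-b$ and free boundary conditions (the measure on $\xi\subseteq\mathsf E$ proportional to $q^{k(\xi)}p^{|\xi|}(1-p)^{|\mathsf E\setminus\xi|}$). Analogously, the law of $\omega'$ stochastically dominates the $\mathrm{FK}(q')$ random cluster model on $\mathsf G^*$ with parameter $1-a$.
   Context: $M$ is the sphere or the plane. Let $\mathsf G=(\mathsf V,\mathsf E)$ be a finite connected graph embedded in $M$ with all faces topological discs, and $\mathsf G^*=(\mathsf U,\mathsf E^* )$ its embedded dual ($\mathsf U$ = faces of $\mathsf G$); $e^*$ is the dual edge crossing $e$, $\xi^*=\{e^*:e\in\xi\}$. Fix integers $q,q'\ge1$, finite $Q,Q'\subset\mathbb C$ with $Q=-Q$, $Q'=-Q'$, $|Q|=q$, $|Q'|=q'$, and $a,b\in(0,1]$. For $\sigma:\mathsf V\to Q$, $\eta(\sigma)\subseteq\mathsf E^*$ is the set of $e^*$ whose primal $e$ has endpoints with different $\sigma$-values; for $\sigma':\mathsf U\to Q'$, $\eta(\sigma')\subseteq\mathsf E$ is the set of $e$ whose dual $e^*$ has endpoints with different $\sigma'$-values. $\mathbf P(\sigma,\sigma')\propto a^{|\eta(\sigma')|}b^{|\eta(\sigma)|}$ on $\Sigma=\{(\sigma,\sigma'):\eta(\sigma)^*\cap\eta(\sigma')=\emptyset\}$. Percolation: given $(\sigma,\sigma')$, every edge of $\eta(\sigma')$ and every dual edge of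 $\eta(\sigma)$ is open; for each pair $(e,e^* )$ with $e\notin\eta(\sigma')$, $e^*\notin\eta(\sigma)$, independently: if $a+b\le1$, ($e$ open, $e^*$ closed) w.p. $a$, ($e$ closed, $e^*$ open) w.p. $b$, both open w.p. $1-a-b$; if $a+b\ge1$, ($e$ open, $e^*$ closed) w.p. $1-b$, ($e$ closed, $e^*$ open) w.p. $1-a$, both closed w.p. $a+b-1$. $\omega$, $\omega'$ are the sets of open primal and dual edges. $k(\xi)$ is the number of connected components of $(\mathsf V,\xi)$ (for dual configurations, of $(\mathsf U,\xi)$), isolated vertices included. Stochastic domination is with respect to inclusion of edge sets. *)

From HB Require Import structures.
From mathcomp Require Import all_boot all_order all_algebra.
From mathcomp Require Import fingroup perm finmap.
From mathcomp Require Import complex.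
From mathcomp Require Import reals.
Set Implicit Arguments. Unset Strict Implicit. Unset Printing Implicit Defensive.
Import Order.TTheory GRing.Theory Num.Theory.
Local Open Scope ring_scope.

(* A finite connected graph cellularly embedded in the sphere, encoded   *)
(* as a combinatorial map (rotation system) of Euler characteristic 2.   *)
(* D = darts (half-edges), alpha = the edge involution, sigma = rotation *)
(* around vertices; faces are the orbits of  d |-> sigma (alpha d).      *)
(* V, E, U are the types of vertices, edges, faces, identified with the  *)
(* respective orbits through the surjections vert, edge, face.           *)
(* The dual edge e^* of e is indexed by e itself: it joins the faces     *)
(* face d and face (alpha d) for any dart d of e.                        *)

Definition face_perm (D : finType) (alpha sigma : {perm D}) : D -> D :=
  fun d => sigma (alpha d).

Definition planar_map (D V E U : finType) (alpha sigma : {perm D})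
  (vert : D -> V) (edge : D -> E) (face : D -> U) : Prop :=
  (forall d, alpha (alpha d) = d /\ alpha d != d) /\
  (forall d d', vert d = vert d' <-> fconnect sigma d d') /\
  (forall d d', edge d = edge d' <-> (d' = d \/ d' = alpha d)) /\
  (forall d d', face d = face d' <-> fconnect (face_perm alpha sigma) d d') /\
  (forall v, exists d, vert d = v) /\ (forall e, exists d, edge d = e) /\
  (forall u, exists d, face d = u) /\
  (forall d d', connect (fun x y => (y == alpha x) || (y == sigma x)) d d') /\
  (* genus zero: Euler's formula V - E + F = 2 *)
  (#|V| + #|U| = #|E| + 2)%N.

Definition primal_adj (D V E : finType) (alpha : {perm D}) (vert : D -> V)
  (edge : D -> E) (xi : {set E}) : rel V :=
  fun v w => [exists d, [&& edge d \in xi, vert d == v & vert (alpha d) == w]].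

Definition dual_adj (D U E : finType) (alpha : {perm D}) (face : D -> U)
  (edge : D -> E) (xi : {set E}) : rel U :=
  fun u w => [exists d, [&& edge d \in xi, face d == u & face (alpha d) == w]].

(* number of connected components, isolated vertices included *)
Definition ncomp (T : finType) (r : rel T) : nat := n_comp r predT.

Definition fk_weight (R : realType) (E : finType) (k : {set E} -> nat)
  (q : nat) (p : R) (xi : {set E}) : R :=
  (q%:R) ^+ (k xi) * p ^+ #|xi| * (1 - p) ^+ #|~: xi|.

Definition fk_measure (R : realType) (E : finType) (k : {set E} -> nat)
  (q : nat) (p : R) (xi : {set E}) : R :=
  fk_weight k q p xi / \sum_(z : {set E}) fk_weight k q p z.

Section Model.
Variables (R : realType) (D V E U : finType) (alpha sigma : {perm D})
  (vert : D -> V) (edge : D -> E) (face : D -> U)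
  (Q Q' : {fset R[i]}) (a b : R).

(* eta(s) : dual edges e^* (indexed by e) whose primal e has endpoints with
   different spins *)
Definition eta_primal (s : {ffun V -> Q}) : {set E} :=
  [set e | [exists d, (edge d == e) && (val (s (vert d)) != val (s (vert (alpha d))))]].

Definition eta_dual (s' : {ffun U -> Q'}) : {set E} :=
  [set e | [exists d, (edge d == e) && (val (s' (face d)) != val (s' (face (alpha d))))]].

Definition in_Sigma (s : {ffun V -> Q}) (s' : {ffun U -> Q'}) : bool :=
  [disjoint eta_primal s & eta_dual s'].

Definition spin_weight (s : {ffun V -> Q}) (s' : {ffun U -> Q'}) : R :=
  if in_Sigma s s' then a ^+ #|eta_dual s'| * b ^+ #|eta_primal s| else 0.

Definition spin_Z : R :=
  \sum_(s : {ffun V -> Q}) \sum_(s' : {ffun U -> Q'}) spin_weight s s'.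

(* conditional probability that e is open (o) and e^* is open (o') *)
Definition pair_prob (s : {ffun V -> Q}) (s' : {ffun U -> Q'}) (e : E)
  (o o' : bool) : R :=
  if e \in eta_dual s' then (if o && ~~ o' then 1 else 0)
  else if e \in eta_primal s then (if ~~ o && o' then 1 else 0)
  else if a + b <= 1 then
    match o, o' with
    | true, false => a | false, true => b
    | true, true => 1 - a - b | false, false => 0 end
  else
    match o, o' with
    | true, false => 1 - b | false, true => 1 - a
    | false, false => a + b - 1 | true, true => 0 end.

(* joint law of (omega, omega'); omega' is a set of dual edges, indexed by E *)
Definition perc_law (xi xi' : {set E}) : R :=
  \sum_(s : {ffun V -> Q}) \sum_(s' : {ffun U -> Q'})
     (spin_weight s s' / spin_Z) * \prod_(e : E) pair_prob s s' e (e \in xi) (e \in xi').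

Definition law_omega (xi : {set E}) : R := \sum_(xi' : {set E}) perc_law xi xi'.
Definition law_omega' (xi' : {set E}) : R := \sum_(xi : {set E}) perc_law xi xi'.

End Model.

Definition increasing (E : finType) (A : {set {set E}}) : bool :=
  [forall x : {set E}, forall y : {set E}, (x \in A) && (x \subset y) ==> (y \in A)].

Definition stoch_dominates (R : realType) (E : finType) (mu nu : {set E} -> R) : Prop :=
  forall A : {set {set E}}, increasing A ->
    \sum_(xi in A) nu xi <= \sum_(xi in A) mu xi.

From HB Require Import structures.
From mathcomp Require Import all_boot all_order all_algebra.
From mathcomp Require Import fingroup perm finmap complex reals.
From mathcomp Require Import ring zify.
Import Order.TTheory GRing.Theory Num.Theory.
Set Implicit Arguments. Unset Strict Implicit. Unset Printing Implicit Defensive.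
Local Open Scope ring_scope.

(* Summing out the dual percolation and then the primal spins, the law of omega
   is a mixture, over the dual spins s', of FK(q) measures with parameter 1 - b
   conditioned on the edges of eta(s') being open: the spin configurations
   compatible with omega are those constant on its clusters, q^k(omega) of them.
   The number of clusters is supermodular (adding an edge merges at most two of
   them, and does so more readily in a smaller configuration), so the FKG lattice
   condition holds and the Ahlswede-Daykin four functions theorem shows that each
   conditioned measure dominates the unconditioned one; hence so does the mixture.
   The dual statement is the same argument with primal and dual exchanged. *)

Section AddEdge.
Variables (T : finType) (r : rel T) (u v : T).
Hypothesis r_sym : symmetric r.

Definition add_edge : rel T :=
  fun x y => [|| r x y, (x == u) && (y == v) | (x == v) && (y == u)].

Lemma add_edge_sym : symmetric add_edge.
Proof.
move=> x y; rewrite /add_edge r_sym; congr (_ || _).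
by rewrite orbC; congr (_ || _); rewrite andbC.
Qed.

Let connect_r_sym := sym_connect_sym r_sym.
Let connect_add_sym := sym_connect_sym add_edge_sym.

Let touching x := connect r x u || connect r x v.

Let touching_connect x y : connect r x y -> touching x = touching y.
Proof.
move=> cxy; rewrite /touching; apply/idP/idP => /orP[] h.
- by rewrite (connect_trans _ h) // connect_r_sym.
- by rewrite (connect_trans _ h) ?orbT // connect_r_sym.
- by rewrite (connect_trans cxy h).
- by rewrite (connect_trans cxy h) ?orbT.
Qed.

Let connect_add_of_r x y : connect r x y -> connect add_edge x y.
Proof. by apply: connect_sub => z t rzt; apply: connect1; rewrite /add_edge rzt. Qed.

Let touching_u x : touching x -> connect add_edge x u.
Proof.
case/orP => [/connect_add_of_r // | /connect_add_of_r cxv].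
apply: connect_trans cxv _; rewrite connect_add_sym.
by apply: connect1; rewrite /add_edge !eqxx orbT.
Qed.

Lemma connect_add_edge x y :
  connect add_edge x y = connect r x y || touching x && touching y.
Proof.
apply/idP/idP; last first.
  case/orP => [/connect_add_of_r // | /andP[/touching_u xu /touching_u yu]].
  by apply: connect_trans xu _; rewrite connect_add_sym.
pose reach := [pred w | connect r x w || touching x && touching w].
have reach_closed : closed add_edge reach.
  have u_touching : touching u by rewrite /touching connect0.
  have v_touching : touching v by rewrite /touching connect0 orbT.
  apply: intro_closed => // z t /or3P[rzt | /andP[/eqP-> /eqP->] | /andP[/eqP-> /eqP->]].
  - rewrite !inE -(touching_connect (connect1 rzt)).
    by case/orP => [cxz | ->]; rewrite ?(connect_trans cxz (connect1 rzt)) ?orbT.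
  - rewrite !inE v_touching andbT => /orP[cxu | /andP[-> _]]; last exact: orbT.
    by rewrite /touching cxu orbT.
  - rewrite !inE u_touching andbT => /orP[cxv | /andP[-> _]]; last exact: orbT.
    by rewrite /touching cxv !orbT.
move=> cxy; have := closed_connect reach_closed cxy.
by rewrite !inE connect0 => <-.
Qed.

Lemma n_comp_add_edge :
  n_comp r predT = (n_comp add_edge predT + ~~ connect r u v)%N.
Proof.
rewrite !(@eq_n_comp_r _ _ predT T) // (n_compC touching r) (n_compC touching add_edge).
have -> : n_comp r touching = (~~ connect r u v).+1.
  rewrite -(n_comp_closure2 connect_r_sym); apply: eq_n_comp_r => x.
  rewrite unfold_in; apply/idP/pred0Pn => [/orP[] cx | [y /andP[]]].
  - by exists u; rewrite !inE /= cx eqxx.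
  - by exists v; rewrite !inE /= cx eqxx orbT.
  - move=> cxy /pred2P[]<-; have {}cxy : connect r x y := cxy;
      by rewrite cxy ?orbT.
have -> : n_comp add_edge touching = 1%N.
  have u_touching : touching u by rewrite /touching connect0.
  rewrite -(n_comp_connect connect_add_sym u); apply: eq_n_comp_r => x.
  rewrite -[x \in connect _ _]/(connect add_edge u x) -[x \in touching]/(touching x).
  rewrite connect_add_edge u_touching /=.
  by apply/idP/orP => [tx | [/touching_connect <- | //]]; [right|].
have -> : n_comp r [predC touching] = n_comp add_edge [predC touching].
  apply: eq_card => x; rewrite !inE -[x \in touching]/(touching x).
  case x_touching: (touching x); rewrite ?andbF // !andbT.
  congr (odflt _ _ == _); apply: eq_pick => y.
  by rewrite connect_add_edge x_touching orbF.
by rewrite addSn add1n addnC.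
Qed.

End AddEdge.

Section ConstantColourings.
Variables (T B : finType) (r : rel T).
Hypothesis r_csym : connect_sym r.

Lemma card_rel_constant_ffun :
  #|[pred f : {ffun T -> B} | [forall x, forall y, r x y ==> (f x == f y)]]| =
  (#|B| ^ n_comp r predT)%N.
Proof.
pose root_of x : {x | roots r x} := exist _ (fingraph.root r x) (roots_root r_csym x).
pose extend (g : {ffun {x | roots r x} -> B}) := [ffun x => g (root_of x)].
have root_ofK y : root_of (val y) = y.
  by apply: val_inj => /=; apply/eqP; case: y.
have extend_inj : injective extend.
  move=> g1 g2 /ffunP eq_g; apply/ffunP => y.
  by have := eq_g (val y); rewrite !ffunE root_ofK.
have -> : n_comp r predT = #|{: {x | roots r x}}|.
  by rewrite card_sig; apply: eq_card => x; rewrite !inE andbT.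
rewrite -card_ffun -(card_codom extend_inj); apply: eq_card => f; rewrite inE.
apply/idP/codomP => [/'forall_forallP f_const | [g ->]].
  exists [ffun y => f (val y)]; apply/ffunP => x; rewrite !ffunE /=.
  have f_closed : closed r [pred z | f z == f x].
    by move=> y z ryz; rewrite !inE (eqP (implyP (f_const y z) ryz)).
  by have := closed_connect f_closed (connect_root r x); rewrite !inE eqxx => /esym/eqP.
apply/'forall_forallP => x y; apply/implyP => rxy; rewrite !ffunE.
suff -> : root_of x = root_of y by [].
by apply: val_inj; apply/(fingraph.rootP r_csym)/connect1.
Qed.

End ConstantColourings.

Section FourFunctions.
Variables (R : numDomainType) (E : finType).

Lemma four_functions_bool (a0 a1 b0 b1 c0 c1 d0 d1 : R) :
  0 <= a0 -> 0 <= a1 -> 0 <= b0 -> 0 <= b1 -> 0 <= c0 -> 0 <= c1 -> 0 <= d0 -> 0 <= d1 ->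
  a0 * b0 <= c0 * d0 -> a0 * b1 <= c1 * d0 -> a1 * b0 <= c1 * d0 -> a1 * b1 <= c1 * d1 ->
  (a0 + a1) * (b0 + b1) <= (c0 + c1) * (d0 + d1).
Proof.
move=> a0_ge0 a1_ge0 b0_ge0 b1_ge0 c0_ge0 c1_ge0 d0_ge0 d1_ge0 h00 h01 h10 h11.
set u := a0 * b1; set v := a1 * b0; set w := c1 * d0; set z := c0 * d1.
have cross : u + v <= w + z.
  have [w0 | w_neq0] := eqVneq w 0.
    have [-> ->] : u = 0 /\ v = 0.
      by split; apply/le_anti; rewrite mulr_ge0 //= -w0 ?h01 ?h10.
    by rewrite w0 !add0r mulr_ge0.
  have w_gt0 : 0 < w by rewrite lt_def w_neq0 mulr_ge0.
  have uv_le : u * v <= w * z.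
    have -> : u * v = (a0 * b0) * (a1 * b1) by rewrite /u /v; ring.
    have -> : w * z = (c0 * d0) * (c1 * d1) by rewrite /w /z; ring.
    by apply: ler_pM; rewrite ?mulr_ge0.
  (* [w (u + v) = w^2 + u v - (w - u)(w - v)], and both u, v are at most w *)
  rewrite -(ler_pM2l w_gt0).
  have -> : w * (u + v) = w * w + u * v - (w - u) * (w - v) by ring.
  rewrite lerBlDr [w * (w + z)]mulrDr -addrA lerD2l (le_trans uv_le) // lerDl.
  by rewrite mulr_ge0 // subr_ge0.
have -> : (a0 + a1) * (b0 + b1) = a0 * b0 + a1 * b1 + (u + v) by rewrite /u /v; ring.
have -> : (c0 + c1) * (d0 + d1) = c0 * d0 + c1 * d1 + (w + z) by rewrite /w /z; ring.
by apply: lerD => //; apply: lerD.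
Qed.

Lemma sum_subsets_setD1 (f : {set E} -> R) (F : {set E}) m : m \in F ->
  \sum_(x : {set E} | x \subset F) f x = \sum_(x : {set E} | x \subset F :\ m) (f x + f (m |: x)).
Proof.
move=> mF; rewrite big_split /= (bigID (fun x : {set E} => m \in x)) /= addrC; congr (_ + _).
  by apply: eq_bigl => x; rewrite subsetD1.
rewrite (reindex_onto (fun y => m |: y) (fun x => x :\ m)) /=; last first.
  by move=> x /andP[_ mx]; rewrite setD1K.
apply: eq_bigl => y; rewrite subUset sub1set mF setU11 /= andbT subsetD1; congr (_ && _).
by apply/eqP/idP => [<- | /setU1K //]; rewrite !inE eqxx.
Qed.

Lemma four_functions_subsets (F : {set E}) (al be ga de : {set E} -> R) :
  (forall x, 0 <= al x) -> (forall x, 0 <= be x) ->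
  (forall x, 0 <= ga x) -> (forall x, 0 <= de x) ->
  (forall x y : {set E}, x \subset F -> y \subset F ->
    al x * be y <= ga (x :|: y) * de (x :&: y)) ->
  (\sum_(x : {set E} | x \subset F) al x) * (\sum_(x : {set E} | x \subset F) be x) <=
  (\sum_(x : {set E} | x \subset F) ga x) * (\sum_(x : {set E} | x \subset F) de x).
Proof.
move: {2}#|F| (erefl #|F|) al be ga de => n.
elim: n F => [|n IH] F cardF al be ga de al_ge0 be_ge0 ga_ge0 de_ge0 lattice.
  move/eqP: cardF; rewrite cards_eq0 => /eqP F0; subst F.
  have sum0 f : \sum_(x : {set E} | x \subset set0) f x = f set0 :> R.
    by rewrite (big_pred1 set0) // => x; rewrite subset0.
  by rewrite !sum0; have := lattice set0 set0; rewrite setU0 setI0 sub0set; apply.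
have [m mF] : exists m, m \in F by apply/set0Pn; rewrite -card_gt0 cardF.
rewrite !(sum_subsets_setD1 _ mF).
apply: (IH (F :\ m)) => [|x|x|x|x|x y]; rewrite ?addr_ge0 //.
  by move: cardF; rewrite (cardsD1 m F) mF add1n => -[].
rewrite !subsetD1 => /andP[xF mx] /andP[yF my].
have mxF : m |: x \subset F by rewrite subUset sub1set mF.
have myF : m |: y \subset F by rewrite subUset sub1set mF.
have setI_m (z w : {set E}) : m \notin z -> z :&: (m |: w) = z :&: w.
  by move=> mz; apply/setP => t; rewrite !inE; case: eqP => // ->; rewrite (negbTE mz).
apply: four_functions_bool; rewrite ?lattice //.
- by have := lattice x _ xF myF; rewrite setUCA setI_m.
- by have := lattice _ y mxF yF; rewrite -setUA setIC setI_m // setIC.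
- by have := lattice _ _ mxF myF; rewrite setUACA setUid -setUIr.
Qed.

Lemma four_functions (al be ga de : {set E} -> R) :
  (forall x, 0 <= al x) -> (forall x, 0 <= be x) ->
  (forall x, 0 <= ga x) -> (forall x, 0 <= de x) ->
  (forall x y : {set E}, al x * be y <= ga (x :|: y) * de (x :&: y)) ->
  (\sum_x al x) * (\sum_x be x) <= (\sum_x ga x) * (\sum_x de x).
Proof.
move=> al_ge0 be_ge0 ga_ge0 de_ge0 lattice.
have sumT f : \sum_(x : {set E} | x \subset setT) f x = \sum_x f x :> R.
  by apply: eq_bigl => x; rewrite subsetT.
by rewrite -!sumT four_functions_subsets.
Qed.

End FourFunctions.

Definition supermodular (E : finType) (k : {set E} -> nat) : Prop :=
  forall x y, (k x + k y <= k (x :|: y) + k (x :&: y))%N.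

Lemma supermodular_setU1 (E : finType) (k : {set E} -> nat) :
  (forall (z w : {set E}) e, z \subset w -> k w + k (e |: z) <= k z + k (e |: w))%N ->
  supermodular k.
Proof.
move=> incr x y; move: {2}#|y :\: x| (erefl #|y :\: x|) => n.
elim: n y => [|n IH] y card_yx.
  move/eqP: card_yx; rewrite cards_eq0 setD_eq0 => yx.
  by rewrite (setUidPl yx) (setIidPr yx).
have [e e_yx] : exists e, e \in y :\: x by apply/set0Pn; rewrite -card_gt0 card_yx.
have [ex ey] : e \notin x /\ e \in y by move: e_yx; rewrite inE => /andP[].
have := IH (y :\ e).
have -> : x :&: (y :\ e) = x :&: y.
  by apply/setP => z; rewrite !inE; case: eqP => // ->; rewrite (negbTE ex).
have := incr _ _ e (subsetUr x (y :\ e)).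
rewrite setUCA !setD1K // => incr_e IHe.
suff /IHe : #|(y :\ e) :\: x| = n by lia.
move: card_yx; rewrite (cardsD1 e) e_yx add1n => -[<-].
by rewrite !setDDl setUC.
Qed.

Section DartGraph.
Variables (D V E : finType) (alpha : {perm D}) (vert : D -> V) (edge : D -> E).
Hypothesis alphaK : involutive alpha.
Hypothesis edge_fiber : forall d d', edge d = edge d' <-> (d' = d \/ d' = alpha d).
Hypothesis edge_surj : forall e, exists d, edge d = e.

Local Notation adj := (primal_adj alpha vert edge).
Local Notation k xi := (ncomp (primal_adj alpha vert edge xi)).

Lemma edge_alpha d : edge (alpha d) = edge d.
Proof. by apply/esym/edge_fiber; right. Qed.

Lemma primal_adj_sym xi : symmetric (adj xi).
Proof.
by move=> x y; apply/existsP/existsP => -[d /and3P[xi_d dx dy]]; exists (alpha d);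
  rewrite edge_alpha xi_d alphaK dx dy.
Qed.

Lemma primal_adj_setU1 xi d :
  adj (edge d |: xi) =2 add_edge (adj xi) (vert d) (vert (alpha d)).
Proof.
move=> x y; apply/existsP/or3P => [[d' /and3P[]] | ].
  rewrite in_setU1 => /orP[/eqP/edge_fiber[]-> | xi_d'] /eqP<- /eqP<-.
  - by apply: Or32; rewrite !eqxx.
  - by apply: Or33; rewrite alphaK !eqxx.
  - by apply: Or31; apply/existsP; exists d'; rewrite xi_d' !eqxx.
case=> [/existsP[d' /and3P[xi_d' dx dy]] | /andP[/eqP-> /eqP->] | /andP[/eqP-> /eqP->]].
- by exists d'; rewrite in_setU1 xi_d' orbT dx dy.
- by exists d; rewrite setU11 !eqxx.
- by exists (alpha d); rewrite edge_alpha setU11 alphaK !eqxx.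
Qed.

Lemma ncomp_setU1 xi d :
  k xi = (k (edge d |: xi) + ~~ connect (adj xi) (vert d) (vert (alpha d)))%N.
Proof.
rewrite /ncomp (n_comp_add_edge (vert d) (vert (alpha d)) (primal_adj_sym xi)); congr (_ + _)%N.
by apply: eq_n_comp => x y; apply: eq_connect => z t; rewrite primal_adj_setU1.
Qed.

Lemma primal_adj_subset (z w : {set E}) : z \subset w -> subrel (adj z) (adj w).
Proof.
move=> zw x y /existsP[d /and3P[z_d dx dy]]; apply/existsP; exists d.
by rewrite (subsetP zw _ z_d) dx dy.
Qed.

Lemma ncomp_primal_supermodular : supermodular (fun xi => k xi).
Proof.
apply: supermodular_setU1 => z w e zw; have [d <-] := edge_surj e.
rewrite (ncomp_setU1 z d) (ncomp_setU1 w d).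
have : connect (adj z) (vert d) (vert (alpha d)) ==> connect (adj w) (vert d) (vert (alpha d)).
  by apply/implyP; apply: connect_sub => x y /(primal_adj_subset zw) /connect1.
by case: (connect (adj z) _ _); case: (connect (adj w) _ _) => //= _; lia.
Qed.

End DartGraph.

Lemma prod_open_weight (R : comNzRingType) (E : finType) (T xi : {set E}) (p p' : R) :
  \prod_e (if e \in T then (e \in xi)%:R else if e \in xi then p else p') =
  (T \subset xi)%:R * (p ^+ #|xi :\: T| * p' ^+ #|~: xi|).
Proof.
have [Txi | /subsetPn[e eT exi]] := boolP (T \subset xi); last first.
  by rewrite mul0r (bigD1 e) //= eT (negbTE exi) mul0r.
rewrite /= mul1r -!prodr_const [X in X * _]big_mkcond [X in _ * X]big_mkcond -big_split /=.
apply: eq_bigr => e _.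
rewrite !inE; case: (boolP (e \in T)) => [/(subsetP Txi) -> | _] /=.
  by rewrite mulr1.
by case: (e \in xi); rewrite ?mulr1 ?mul1r.
Qed.

Lemma fk_weight_sum_gt0 (R : realType) (E : finType) (k : {set E} -> nat) (q : nat) (p : R) :
  (0 < q)%N -> 0 <= p < 1 -> 0 < \sum_xi fk_weight k q p xi.
Proof.
move=> q_gt0 /andP[p_ge0 p_lt1]; rewrite (bigD1 set0) //= ltr_pwDl ?sumr_ge0 // => [|xi _].
  by rewrite /fk_weight cards0 expr0 mulr1 mulr_gt0 ?exprn_gt0 ?ltr0n ?subr_gt0.
by rewrite /fk_weight !mulr_ge0 ?exprn_ge0 ?ler0n ?subr_ge0 // ltW.
Qed.

Section ConditionedFK.
Variables (R : realType) (E : finType) (k : {set E} -> nat) (q : nat) (p : R).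
Hypothesis k_super : supermodular k.
Hypothesis q_gt0 : (0 < q)%N.
Hypotheses (p_ge0 : 0 <= p) (p_le1 : p <= 1).

(* unnormalised FK law conditioned on all edges of [T] being open *)
Definition fk_weight_open (T xi : {set E}) : R :=
  (T \subset xi)%:R * (q%:R ^+ k xi * (p ^+ #|xi :\: T| * (1 - p) ^+ #|~: xi|)).

Lemma fk_weight_open0 : fk_weight_open set0 =1 fk_weight k q p.
Proof. by move=> xi; rewrite /fk_weight_open sub0set setD0 mul1r mulrA. Qed.

Lemma fk_weight_open_ge0 T xi : 0 <= fk_weight_open T xi.
Proof. by rewrite !mulr_ge0 ?exprn_ge0 ?subr_ge0. Qed.

Lemma fk_weight_open_lattice T x y :
  fk_weight_open set0 x * fk_weight_open T y <=
  fk_weight_open T (x :|: y) * fk_weight_open set0 (x :&: y).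
Proof.
have [Ty | nTy] := boolP (T \subset y); last first.
  by rewrite [fk_weight_open T y]/fk_weight_open (negbTE nTy) mul0r mulr0
    mulr_ge0 ?fk_weight_open_ge0.
have Txy : T \subset x :|: y by rewrite (subset_trans Ty) ?subsetUr.
rewrite /fk_weight_open Ty Txy !sub0set !setD0 !mul1r.
(* the edge factors balance exactly; only the cluster factor [q ^ k] varies *)
have open_edges : (#|x| + #|y :\: T| = #|(x :|: y) :\: T| + #|x :&: y|)%N.
  have := cardsUI x y; rewrite !cardsDS //.
  have := subset_leq_card Ty; have := subset_leq_card Txy; lia.
have closed_edges : (#|~: x| + #|~: y| = #|~: (x :|: y)| + #|~: (x :&: y)|)%N.
  by rewrite setCU setCI [RHS]addnC cardsUI.
rewrite mulrACA [X in _ <= X]mulrACA -!exprD mulrACA [X in _ <= _ * X]mulrACA.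
rewrite -!exprD open_edges closed_edges ler_wpM2r ?mulr_ge0 ?exprn_ge0 ?subr_ge0 //.
by rewrite ler_weXn2l // ler1n.
Qed.

Lemma fk_weight_open_dominates T (A : {set {set E}}) : increasing A ->
  (\sum_(xi in A) fk_weight k q p xi) * (\sum_xi fk_weight_open T xi) <=
  (\sum_(xi in A) fk_weight_open T xi) * (\sum_xi fk_weight k q p xi).
Proof.
move=> /'forall_forallP A_incr.
have sum_in f : \sum_(xi in A) f xi = \sum_xi f xi * (xi \in A)%:R :> R.
  by rewrite big_mkcond; apply: eq_bigr => xi _; case: (xi \in A); rewrite ?mulr1 ?mulr0.
under eq_bigr do rewrite -fk_weight_open0.
under [X in _ <= _ * X]eq_bigr do rewrite -fk_weight_open0.
rewrite !sum_in; apply: four_functions => [x|x|x|x|x y];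
  try exact: fk_weight_open_ge0; try by rewrite mulr_ge0 ?ler0n ?fk_weight_open_ge0.
have [xA | _] := boolP (x \in A); last first.
  by rewrite mulr0 mul0r mulr_ge0 ?fk_weight_open_ge0 // mulr_ge0 ?fk_weight_open_ge0.
have -> : x :|: y \in A by apply: (implyP (A_incr x _)); rewrite xA subsetUl.
by rewrite !mulr1; apply: fk_weight_open_lattice.
Qed.

End ConditionedFK.

Lemma stoch_dominates_mixture (R : realType) (E I : finType) (mu nu : {set E} -> R)
    (c : I -> R) (w : I -> {set E} -> R) :
  0 < \sum_xi nu xi -> (forall i, 0 <= c i) ->
  mu =1 (fun xi => \sum_i c i * w i xi) -> \sum_xi mu xi = 1 ->
  (forall i A, increasing A ->
    (\sum_(xi in A) nu xi) * (\sum_xi w i xi) <= (\sum_(xi in A) w i xi) * (\sum_xi nu xi)) ->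
  stoch_dominates mu (fun xi => nu xi / \sum_z nu z).
Proof.
move=> nu_gt0 c_ge0 mu_mix mass1 dom_w A A_incr.
under [X in _ <= X]eq_bigr do rewrite mu_mix.
have {}mass1 : \sum_xi \sum_i c i * w i xi = 1.
  by rewrite -mass1; apply: eq_bigr => xi _; rewrite mu_mix.
rewrite -mulr_suml -[X in X <= _]mulr1 -mass1 exchange_big mulr_sumr /= exchange_big /=.
apply: ler_sum => i _; rewrite -!mulr_sumr mulrCA ler_wpM2l // mulrAC ler_pdivrMr //.
exact: dom_w.
Qed.

Lemma sum_set_prod (R : comNzRingType) (E : finType) (F : E -> bool -> R) :
  \sum_(X : {set E}) \prod_e F e (e \in X) = \prod_e (F e true + F e false).
Proof.
under [RHS]eq_bigr do rewrite -big_bool.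
rewrite bigA_distr_bigA /= (reindex (fun f : {ffun E -> bool} => [set e | f e])) /=.
  by apply: eq_bigr => f _; apply: eq_bigr => e _; rewrite inE.
exists (fun X : {set E} => [ffun e => e \in X]) => [f _ | X _].
  by apply/ffunP => e; rewrite ffunE inE.
by apply/setP => e; rewrite inE ffunE.
Qed.

Lemma natr_disjoint (R : comNzRingType) (T : finType) (A B : {set T}) :
  [disjoint A & B]%:R = \prod_t (~~ ((t \in A) && (t \in B)))%:R :> R.
Proof.
have [AB | ] := boolP [disjoint A & B].
  by rewrite big1 // => t _; case: (boolP (t \in A)) => // /(disjointFr AB) ->.
rewrite -setI_eq0 => /set0Pn[t]; rewrite inE => /andP[tA tB].
by rewrite (bigD1 t) //= tA tB mul0r.
Qed.

(* [pair_prob] with the tests [e \in eta_dual s'] and [e \in eta_primal s]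
   abstracted into booleans, so that identities about it are finite case checks *)
Definition pair_law (R : numDomainType) (a b : R) (inD inP o o' : bool) : R :=
  if inD then (if o && ~~ o' then 1 else 0)
  else if inP then (if ~~ o && o' then 1 else 0)
  else if a + b <= 1 then
    match o, o' with
    | true, false => a | false, true => b
    | true, true => 1 - a - b | false, false => 0 end
  else
    match o, o' with
    | true, false => 1 - b | false, true => 1 - a
    | false, false => a + b - 1 | true, true => 0 end.

Section PairLaw.
Variables (R : numDomainType) (a b : R).

Lemma pair_law_sum1 inD inP :
  pair_law a b inD inP true true + pair_law a b inD inP true false +
  (pair_law a b inD inP false true + pair_law a b inD inP false false) = 1.
Proof.
by rewrite /pair_law; case: inD; case: inP => /=; try case: ifP => _; ring.
Qed.

(* one edge's factor of [spin_weight], times the law of its primal state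
   with the dual state summed out *)
Lemma pair_law_marginal inD inP o :
  (~~ (inP && inD))%:R * (if inP then b else 1) *
    (pair_law a b inD inP o true + pair_law a b inD inP o false) =
  (~~ (inP && o))%:R * (if inD then o%:R else if o then 1 - b else b).
Proof.
by rewrite /pair_law; case: inD; case: inP; case: o => /=; try case: ifP => _; ring.
Qed.

Lemma pair_law_swap inD inP o o' : ~~ (inD && inP) ->
  pair_law b a inP inD o' o = pair_law a b inD inP o o'.
Proof.
by rewrite /pair_law [b + a]addrC; case: inD; case: inP; case: o; case: o' => //= _;
  case: ifP => _ //; ring.
Qed.

End PairLaw.

Section Percolation.
Variables (R : realType) (D V E U : finType) (alpha : {perm D})
  (vert : D -> V) (edge : D -> E) (face : D -> U) (Q Q' : {fset R[i]}) (a b : R).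
Hypothesis alphaK : involutive alpha.
Hypothesis edge_fiber : forall d d', edge d = edge d' <-> (d' = d \/ d' = alpha d).
Hypothesis edge_surj : forall e, exists d, edge d = e.
Hypotheses (Q_gt0 : (0 < #|{: Q}|)%N) (Q'_gt0 : (0 < #|{: Q'}|)%N).
Hypotheses (a_ge0 : 0 <= a) (b_gt0 : 0 < b) (b_le1 : b <= 1).

Local Notation spinV := {ffun V -> Q}.
Local Notation spinU := {ffun U -> Q'}.
Local Notation adj := (primal_adj alpha vert edge).
Local Notation k xi := (ncomp (primal_adj alpha vert edge xi)).
Local Notation etaP := (eta_primal alpha vert edge).
Local Notation etaD := (eta_dual alpha edge face).
Local Notation pp := (pair_prob alpha vert edge face a b).
Local Notation sw := (spin_weight alpha vert edge face a b).
Local Notation Zs := (spin_Z alpha vert edge face Q Q' a b).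
Local Notation law := (law_omega alpha vert edge face Q Q' a b).

Lemma pair_probE (s : spinV) (s' : spinU) e :
  pp s s' e =2 pair_law a b (e \in etaD s') (e \in etaP s).
Proof. by move=> o o'. Qed.

Lemma spin_weight_ge0 (s : spinV) (s' : spinU) : 0 <= sw s s'.
Proof. by rewrite /spin_weight; case: ifP => // _; rewrite mulr_ge0 ?exprn_ge0 // ltW. Qed.

Lemma spin_Z_gt0 : 0 < Zs.
Proof.
have [x0 _] := card_gt0P Q_gt0; have [y0 _] := card_gt0P Q'_gt0.
pose s0 := [ffun _ : V => x0]; pose s0' := [ffun _ : U => y0].
have etaP0 : etaP s0 = set0.
  by apply/setP => e; rewrite !inE; apply/existsP => -[d]; rewrite !ffunE eqxx andbF.
have etaD0 : etaD s0' = set0.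
  by apply/setP => e; rewrite !inE; apply/existsP => -[d]; rewrite !ffunE eqxx andbF.
have sw0 : sw s0 s0' = 1.
  by rewrite /spin_weight /in_Sigma etaP0 etaD0 -setI_eq0 set0I eqxx !cards0 mulr1.
rewrite /spin_Z (bigD1 s0) //= (bigD1 s0') //= sw0 -addrA.
apply: (lt_le_trans ltr01); rewrite lerDl addr_ge0 ?sumr_ge0 // => s _;
  rewrite ?spin_weight_ge0 ?sumr_ge0 // => s' _; exact: spin_weight_ge0.
Qed.

Lemma spin_weightE (s : spinV) (s' : spinU) : sw s s' =
  a ^+ #|etaD s'| * \prod_e ((~~ ((e \in etaP s) && (e \in etaD s')))%:R *
                              (if e \in etaP s then b else 1)).
Proof.
rewrite big_split /= -natr_disjoint /spin_weight /in_Sigma.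
have -> : \prod_e (if e \in etaP s then b else 1) = b ^+ #|etaP s|.
  by rewrite -prodr_const [RHS]big_mkcond.
by case: [disjoint _ & _]; rewrite ?mul0r ?mulr0 ?mul1r.
Qed.

Lemma law_omegaE (xi : {set E}) : law xi =
  Zs^-1 * \sum_(s : spinV) \sum_(s' : spinU) sw s s' *
    \prod_e (pp s s' e (e \in xi) true + pp s s' e (e \in xi) false).
Proof.
rewrite /law_omega /perc_law exchange_big mulr_sumr; apply: eq_bigr => s _.
rewrite exchange_big mulr_sumr; apply: eq_bigr => s' _ /=.
by rewrite -mulr_sumr (sum_set_prod (fun e o' => pp s s' e (e \in xi) o')) mulrAC mulrC.
Qed.

Lemma law_omega_sum1 : \sum_(xi : {set E}) law xi = 1.
Proof.
have prod_pair1 (s : spinV) (s' : spinU) :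
    \prod_e (pp s s' e true true + pp s s' e true false +
             (pp s s' e false true + pp s s' e false false)) = 1.
  by rewrite big1 // => e _; rewrite !pair_probE pair_law_sum1.
under eq_bigr do rewrite law_omegaE.
rewrite -mulr_sumr exchange_big /=.
under eq_bigr => s _ do rewrite exchange_big /=.
under eq_bigr => s _ do under eq_bigr => s' _ do rewrite -mulr_sumr
  (sum_set_prod (fun e o => pp s s' e o true + pp s s' e o false)) prod_pair1 mulr1.
by rewrite mulVf // gt_eqF // spin_Z_gt0.
Qed.

Lemma spin_weight_marginal (xi : {set E}) (s : spinV) (s' : spinU) :
  sw s s' * \prod_e (pp s s' e (e \in xi) true + pp s s' e (e \in xi) false) =
  a ^+ #|etaD s'| * ([disjoint etaP s & xi]%:R *
    \prod_e (if e \in etaD s' then (e \in xi)%:R else if e \in xi then 1 - b else b)).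
Proof.
rewrite spin_weightE -mulrA -big_split natr_disjoint -big_split /=; congr (_ * _).
by apply: eq_bigr => e _; rewrite !pair_probE pair_law_marginal.
Qed.

Lemma disjoint_eta_primal (xi : {set E}) (s : spinV) :
  [disjoint etaP s & xi] = [forall x, forall y, adj xi x y ==> (s x == s y)].
Proof.
apply/idP/'forall_forallP => [dis x y | s_const].
  apply/implyP => /existsP[d /and3P[xi_d /eqP<- /eqP<-]]; apply/negPn/negP => neq.
  have : edge d \in etaP s by rewrite inE; apply/existsP; exists d; rewrite eqxx val_eqE.
  by move/(disjointFr dis); rewrite xi_d.
rewrite disjoint_subset; apply/subsetP => e; rewrite !inE.
case/existsP => d /andP[/eqP<- neq]; apply/negP => xi_d.
move: neq; rewrite val_eqE (implyP (s_const _ _)) //.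
by apply/existsP; exists d; rewrite xi_d !eqxx.
Qed.

Lemma sum_disjoint_eta_primal (xi : {set E}) :
  \sum_(s : spinV) ([disjoint etaP s & xi]%:R : R) = #|{: Q}|%:R ^+ k xi.
Proof.
have adj_csym := sym_connect_sym (primal_adj_sym vert alphaK edge_fiber xi).
rewrite -natr_sum -natrX -(card_rel_constant_ffun Q adj_csym) -sum1_card [in RHS]big_mkcond.
by congr _%:R; apply: eq_bigr => s _; rewrite inE /= disjoint_eta_primal; case: ifP.
Qed.

Lemma law_omega_mixture (xi : {set E}) : law xi = \sum_(s' : spinU)
  Zs^-1 * a ^+ #|etaD s'| * fk_weight_open (fun z => k z) #|{: Q}| (1 - b) (etaD s') xi.
Proof.
rewrite law_omegaE exchange_big mulr_sumr; apply: eq_bigr => s' _ /=.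
under eq_bigr do rewrite spin_weight_marginal mulrCA.
rewrite -mulr_suml sum_disjoint_eta_primal prod_open_weight /fk_weight_open subKr.
ring.
Qed.

Theorem law_omega_dominates :
  stoch_dominates law (fk_measure (fun xi => k xi) #|{: Q}| (1 - b)).
Proof.
have p_ge0 : 0 <= 1 - b by rewrite subr_ge0.
apply: (stoch_dominates_mixture _ _ law_omega_mixture law_omega_sum1).
- by rewrite fk_weight_sum_gt0 // subr_ge0 b_le1 gtrBl.
- by move=> s'; rewrite mulr_ge0 ?exprn_ge0 // invr_ge0 ltW // spin_Z_gt0.
move=> s' A A_incr; apply: fk_weight_open_dominates => //.
  exact: ncomp_primal_supermodular.
by rewrite gerBl ltW.
Qed.

End Percolation.

Section Duality.
Variables (R : realType) (D V E U : finType) (alpha : {perm D})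
  (vert : D -> V) (edge : D -> E) (face : D -> U) (Q Q' : {fset R[i]}) (a b : R).

(* [eta_dual] with [face] is [eta_primal] with [vert := face], so exchanging the
   primal and dual graphs only swaps [a] with [b] and [omega] with [omega'] *)
Lemma spin_weight_swap (s : {ffun V -> Q}) (s' : {ffun U -> Q'}) :
  spin_weight alpha face edge vert b a s' s = spin_weight alpha vert edge face a b s s'.
Proof. by rewrite /spin_weight /in_Sigma disjoint_sym mulrC. Qed.

Lemma spin_Z_swap :
  spin_Z alpha face edge vert Q' Q b a = spin_Z alpha vert edge face Q Q' a b.
Proof.
by rewrite /spin_Z exchange_big; apply: eq_bigr => s _; apply: eq_bigr => s' _;
  rewrite spin_weight_swap.
Qed.

Lemma law_omega'_swap :
  law_omega' alpha vert edge face Q Q' a b =1 law_omega alpha face edge vert Q' Q b a.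
Proof.
move=> xi'; apply: eq_bigr => xi _; rewrite /perc_law [RHS]exchange_big.
apply: eq_bigr => s _; apply: eq_bigr => s' _ /=; rewrite spin_weight_swap spin_Z_swap.
have [Sigma_ss' | ] := boolP (in_Sigma alpha vert edge face s s'); last first.
  by rewrite /spin_weight => /negbTE->; rewrite !mul0r.
congr (_ * _); apply: eq_bigr => e _; rewrite /pair_prob -/(pair_law a b) -/(pair_law b a).
by apply/esym/pair_law_swap; apply/andP => -[eD eP]; rewrite (disjointFr Sigma_ss' eP) in eD.
Qed.

End Duality.

Theorem lemma6p2 (R : realType) (D V E U : finType) (alpha sigma : {perm D})
  (vert : D -> V) (edge : D -> E) (face : D -> U)
  (q q' : nat) (Q Q' : {fset R[i]}) (a b : R) :
  planar_map alpha sigma vert edge face ->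
  (1 <= q)%N -> (1 <= q')%N ->
  (#|` Q|)%fset = q -> (#|` Q'|)%fset = q' ->
  (forall x, (x \in Q)%fset -> (- x \in Q)%fset) -> (forall x, (x \in Q')%fset -> (- x \in Q')%fset) ->
  0 < a <= 1 -> 0 < b <= 1 ->
  stoch_dominates (law_omega alpha vert edge face Q Q' a b)
    (fk_measure (fun xi => ncomp (primal_adj alpha vert edge xi)) q (1 - b))
  /\
  stoch_dominates (law_omega' alpha vert edge face Q Q' a b)
    (fk_measure (fun xi => ncomp (dual_adj alpha face edge xi)) q' (1 - a)).
Proof.
move=> [alpha_inv [_ [edge_fiber [_ [_ [edge_surj _]]]]]] q_gt0 q'_gt0 cardQ cardQ' _ _
  /andP[a_gt0 a_le1] /andP[b_gt0 b_le1].
have alphaK : involutive alpha by move=> d; case: (alpha_inv d).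
subst q q'; rewrite !cardfE in q_gt0 q'_gt0 *.
split.
  by apply: (law_omega_dominates vert face alphaK edge_fiber edge_surj) => //; exact: ltW.
move=> A A_incr; under [X in _ <= X]eq_bigr do rewrite law_omega'_swap.
by apply: (law_omega_dominates face vert alphaK edge_fiber edge_surj) => //; exact: ltW.
Qed.
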